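(* The bicyclic monoid $B = \langle p,q : pq = 1 \rangle$ is not sofic.
   Context: The bicyclic monoid is the monoid given by the presentation with two generators $p,q$ and the single relation $pq=1$; every element can be written uniquely as $q^a p^b$ with $a,b$ non-negative integers. For a non-empty finite set $X$, $\mathrm{Map}(X)$ denotes the monoid of all maps $X \to X$ under composition (identity element $\mathrm{Id}_X$), equipped with the Hamming metric $d_X(f,g) = |\{x \in X : f(x) \neq g(x)\}|/|X|$. Let $M$ be a monoid with identity $1_M$, $K \subset M$ finite and $\varepsilon,\alpha>0$. A map $\varphi\colon M \to \mathrm{Map}(X)$ is a $(K,\varepsilon)$-morphism if $d_X(\varphi(k_1k_2),\varphi(k_1)\varphi(k_2)) \le \varepsilon$ for all $k_1,k_2 \in K$ and $d_X(\varphi(1_M),\mathrm{Id}_X) \le \varepsilon$; it is $(K,\alpha)$-injective if $d_X(\varphi(k_1),\varphi(k_2)) \ge \alpha$ for all distinct $k_1,k_2 \in K$. The monoid $M$ is called sofic if for every finite subset $K \subset M$ and every $\varepsilon>0$ there exist a non-empty finite set $X$ and a map $\varphi\colon M \to \mathrm{Map}(X)$ that is a $(K,1-\varepsilon)$-injective $(K,\varepsilon)$-morphism. *)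

From mathcomp Require Import all_boot all_order all_algebra.
From mathcomp Require Import zify.
Set Implicit Arguments. Unset Strict Implicit. Unset Printing Implicit Defensive.
Import Order.TTheory GRing.Theory Num.Theory.
Local Open Scope ring_scope.

Record monoid := Monoid {
  mcar :> Type;
  mop : mcar -> mcar -> mcar;
  mone : mcar;
  mopA : forall x y z, mop x (mop y z) = mop (mop x y) z;
  mop1m : forall x, mop mone x = x;
  mopm1 : forall x, mop x mone = x }.

(* Bicyclic monoid <p,q | pq = 1>, elements in normal form q^a p^b
   encoded as the pair (a, b).  (q^a p^b)(q^c p^d) = q^(a+c-b) p^(d+b-c)
   with truncated subtractions. *)
Definition bic_mul (x y : nat * nat) : nat * nat :=
  ((x.1 + (y.1 - x.2))%N, (y.2 + (x.2 - y.1))%N).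
Definition bic_one : nat * nat := (0%N, 0%N).
Definition bic_p : nat * nat := (0%N, 1%N).
Definition bic_q : nat * nat := (1%N, 0%N).

Lemma bic_mulA x y z : bic_mul x (bic_mul y z) = bic_mul (bic_mul x y) z.
Proof.
case: x => a b; case: y => c d; case: z => e f; rewrite /bic_mul /=.
congr pair; lia.
Qed.
Lemma bic_mul1m x : bic_mul bic_one x = x.
Proof. case: x => a b; rewrite /bic_mul /=; congr pair; lia. Qed.
Lemma bic_mulm1 x : bic_mul x bic_one = x.
Proof. case: x => a b; rewrite /bic_mul /=; congr pair; lia. Qed.

Definition bicyclic : monoid := Monoid bic_mulA bic_mul1m bic_mulm1.

Lemma bic_pq : bic_mul bic_p bic_q = bic_one. Proof. by []. Qed.

Definition hamming (X : finType) (f g : X -> X) : rat :=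
  #|[set x | f x != g x]|%:R / #|X|%:R.

Definition is_Keps_morphism (M : monoid) (X : finType) (phi : M -> X -> X)
    (K : seq M) (eps : rat) : Prop :=
  (forall k1 k2, List.In k1 K -> List.In k2 K ->
      hamming (phi (mop k1 k2)) (phi k1 \o phi k2) <= eps)
  /\ hamming (phi (mone M)) id <= eps.

Definition is_Kalpha_injective (M : monoid) (X : finType) (phi : M -> X -> X)
    (K : seq M) (alpha : rat) : Prop :=
  forall k1 k2, List.In k1 K -> List.In k2 K -> k1 <> k2 ->
      alpha <= hamming (phi k1) (phi k2).

Definition sofic (M : monoid) : Prop :=
  forall (K : seq M) (eps : rat), 0 < eps ->
    exists (X : finType) (phi : M -> X -> X),
      (0 < #|X|)%N /\ is_Kalpha_injective phi K (1 - eps)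
      /\ is_Keps_morphism phi K eps.

(* In a finite set, a one-sided inverse is almost two-sided: if P (Q x) = x
   outside a set of size m, then Q is injective on the complement of that set,
   and Q (P y) = y on its image, which misses at most m points.  Hence for an
   approximate representation phi of the bicyclic monoid, phi(q) phi(p) is as
   close to the identity as phi(p) phi(q) ~ phi(1) is, so phi(qp) stays within
   4 eps of phi(1) instead of being almost everywhere different from it. *)
From mathcomp Require Import all_boot all_order all_algebra.
From mathcomp Require Import lra.
Import Order.TTheory GRing.Theory Num.Theory.
Local Open Scope ring_scope.
Set Implicit Arguments.

Section Hamming.

Context {X : finType}.

Lemma hamming_sym (f g : X -> X) : hamming f g = hamming g f.
Proof. by congr (_ / _); congr (_%:R); apply: eq_card => x; rewrite !inE eq_sym. Qed.

Lemma hamming_le (f g f' g' : X -> X) :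
  (#|[set x | f x != g x]| <= #|[set x | f' x != g' x]|)%N ->
  hamming f g <= hamming f' g'.
Proof. by move=> le_card; rewrite ler_wpM2r ?invr_ge0 ?ler0n ?ler_nat. Qed.

Lemma hamming_triangle (f g h : X -> X) :
  hamming f h <= hamming f g + hamming g h.
Proof.
rewrite /hamming -mulrDl ler_wpM2r ?invr_ge0 ?ler0n // -natrD ler_nat.
apply: leq_trans (leq_card_setU _ _); apply: subset_leq_card.
apply/subsetP => x; rewrite !inE; apply: contraR; rewrite negb_or !negbK.
by move=> /andP[/eqP -> /eqP ->].
Qed.

Lemma card_comp_neq_id (P Q : X -> X) :
  (#|[set y | Q (P y) != y]| <= #|[set x | P (Q x) != x]|)%N.
Proof.
pose A := [set x | P (Q x) == x].
have card_QA : #|Q @: A| = #|A|.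
  apply: card_in_imset => x y; rewrite !inE => /eqP PQx /eqP PQy Qxy.
  by rewrite -PQx -PQy Qxy.
have sub_QA : [set y | Q (P y) != y] \subset ~: (Q @: A).
  apply/subsetP => y; rewrite !inE; apply: contra => /imsetP[x].
  by rewrite inE => /eqP PQx ->; rewrite PQx.
have -> : [set x | P (Q x) != x] = ~: A by apply/setP => x; rewrite !inE.
apply: leq_trans (subset_leq_card sub_QA) _.
by rewrite -(leq_add2l #|A|) cardsC -{1}card_QA cardsC.
Qed.

Lemma hamming_comp_id_swap (P Q : X -> X) :
  hamming (Q \o P) id <= hamming (P \o Q) id.
Proof. apply: hamming_le; exact: (card_comp_neq_id P Q). Qed.

End Hamming.

Definition bic_qp : bicyclic := (1, 1)%N.

Lemma bicyclic_morphism_qp_near_one (X : finType) (phi : bicyclic -> X -> X)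
    (eps : rat) :
  is_Keps_morphism phi [:: bic_one; bic_p; bic_q; bic_qp] eps ->
  hamming (phi bic_qp) (phi bic_one) <= 4 * eps.
Proof.
move=> [mor one].
have pq : hamming (phi bic_one) (phi bic_p \o phi bic_q) <= eps.
  by apply: (mor bic_p bic_q) => /=; tauto.
have qp : hamming (phi bic_qp) (phi bic_q \o phi bic_p) <= eps.
  by apply: (mor bic_q bic_p) => /=; tauto.
have pq_id : hamming (phi bic_p \o phi bic_q) id <= 2 * eps.
  apply: le_trans (hamming_triangle _ (phi bic_one) _) _.
  by rewrite hamming_sym; lra.
have qp_id := le_trans (hamming_comp_id_swap (phi bic_p) (phi bic_q)) pq_id.
apply: le_trans (hamming_triangle _ (phi bic_q \o phi bic_p) _) _.
apply: le_trans (lerD (lexx _) (hamming_triangle _ id _)) _.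
by rewrite [hamming id _]hamming_sym; lra.
Qed.

Theorem theorem5p1 : ~ sofic bicyclic.
Proof.
move=> /(_ [:: bic_one; bic_p; bic_q; bic_qp] (1 / 10) isT).
move=> [X [phi [_ [inj mor]]]].
have far : 1 - 1 / 10 <= hamming (phi bic_qp) (phi bic_one).
  by apply: inj => //=; tauto.
have near := bicyclic_morphism_qp_near_one mor.
lra.
Qed.
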